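(* Let $m\mid n$ be positive integers, $q$ a primitive $m$-th root of unity, $\alpha\in\mathbb{C}$, and fix a primitive $n$-th root of unity $\zeta$ with $\zeta^{n/m}=q$. Let $T=T(n,m,\alpha)$. (i) Suppose $A$ is a central simple algebra which is a $T$-module algebra. Let $A=\bigoplus_{i\in\mathbb{Z}/n\mathbb{Z}}A_i$ be the decomposition into eigenspaces for $g$, where $g$ acts on $A_i$ by $\zeta^i$, and write $|a|=i$ for $a\in A_i$. Then there exists $c\in A_{n/m}$ such that $x\cdot a=ca-\zeta^{|a|}ac$ for every homogeneous $a\in A$, and this $c$ satisfies $c^ma-\zeta^{m|a|}ac^m=\alpha(1-\zeta^{m|a|})a$ for every homogeneous $a\in A$. (ii) Conversely, let $A=\bigoplus_{i\in\mathbb{Z}/n\mathbb{Z}}A_i$ be a $\mathbb{Z}/n\mathbb{Z}$-graded central simple division algebra and let $c\in A_{n/m}$ satisfy $c^ma-\zeta^{m|a|}ac^m=\alpha(1-\zeta^{m|a|})a$ for each homogeneous $a\in A$. Then there is a unique action of $T$ on $A$ with $g\cdot a=\zeta^{|a|}a$ and $x\cdot a=ca-\zeta^{|a|}ac$ for homogeneous $a$, and this action makes $A$ a $T$-module algebra.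
   Context: For positive integers $m\mid n$, a primitive $m$-th root of unity $q$, and $\alpha\in\mathbb{C}$, the generalized Taft algebra is the Hopf algebra $T(n,m,\alpha)=\mathbb{C}\langle x,g\rangle/(x^m-\alpha(1-g^m),\ g^n-1,\ gxg^{-1}-qx)$ with $g$ grouplike and $\Delta(x)=x\otimes 1+g\otimes x$. A central simple algebra is a simple algebra finite-dimensional over its center. A $T$-module algebra is an algebra $A$ with a $T$-module structure satisfying $h\cdot(ab)=(h_1\cdot a)(h_2\cdot b)$, $h\cdot 1=\epsilon(h)1$; in particular $g$ acts by an algebra automorphism, so the eigenspace decomposition is an algebra grading. *)

From mathcomp Require Import all_boot all_algebra complex.
From mathcomp Require Import reals.
Set Implicit Arguments. Unset Strict Implicit. Unset Printing Implicit Defensive.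
Import GRing.Theory.
Local Open Scope ring_scope.

Section Defs.
Variables (K : fieldType) (A : algType K).

Definition central (z : A) : Prop := forall b : A, z * b = b * z.

Definition two_sided_ideal (I : A -> Prop) : Prop :=
  [/\ I 0, (forall a b, I a -> I b -> I (a + b)),
      (forall r a, I a -> I (r * a)) & (forall r a, I a -> I (a * r))].

Definition simple_alg : Prop :=
  (1 : A) != 0 /\
  forall I : A -> Prop, two_sided_ideal I ->
    (forall a, I a -> a = 0) \/ (forall a, I a).

(* finite-dimensional over its center: finitely generated as a module over
   the center (the center is a field since A is simple) *)
Definition findim_over_center : Prop :=
  exists s : seq A, forall a : A,
    exists zs : seq A, [/\ size zs = size s, (forall z, z \in zs -> central z)
      & a = \sum_(i < size s) zs`_i * s`_i].

Definition central_simple : Prop := simple_alg /\ findim_over_center.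

Definition division_alg : Prop :=
  forall a : A, a != 0 -> exists b : A, a * b = 1 /\ b * a = 1.

(* A T(n,m,alpha)-module structure on A: since T = K<x,g>/(x^m - alpha(1-g^m),
   g^n - 1, g x g^-1 - q x), a T-module structure is exactly a pair of linear
   maps G (action of g) and X (action of x) satisfying the defining relations. *)
Definition Taft_module (n m : nat) (q alpha : K) (G X : A -> A) : Prop :=
  [/\ (forall (k : K) (a b : A), G (k *: a + b) = k *: G a + G b),
      (forall (k : K) (a b : A), X (k *: a + b) = k *: X a + X b),
      (forall a, iter m X a = alpha *: (a - iter m G a)),
      (forall a, iter n G a = a)
    & (forall a, G (X a) = q *: X (G a))].

(* The module-algebra axioms h.(ab) = (h1.a)(h2.b), h.1 = eps(h) 1, checked on
   the algebra generators g (grouplike: Delta g = g (x) g, eps g = 1) and x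
   (Delta x = x (x) 1 + g (x) x, eps x = 0) of T; they then hold for all h. *)
Definition Taft_module_algebra (n m : nat) (q alpha : K) (G X : A -> A) : Prop :=
  [/\ Taft_module n m q alpha G X,
      (forall a b, G (a * b) = G a * G b), G 1 = 1,
      (forall a b, X (a * b) = X a * b + G a * X b) & X 1 = 0].

(* A Z/nZ-grading of A: Ai i is the degree-(i mod n) component, for i : nat. *)
Definition Zn_grading (n : nat) (Ai : nat -> A -> Prop) : Prop :=
  [/\ (forall i, Ai i 0 /\ (forall (k : K) a b, Ai i a -> Ai i b -> Ai i (k *: a + b))),
      (forall i a, Ai i a <-> Ai (i %% n)%N a),
      (forall a, exists f : 'I_n -> A, (forall i : 'I_n, Ai i (f i)) /\ a = \sum_i f i),
      (forall f : 'I_n -> A, (forall i : 'I_n, Ai i (f i)) -> \sum_i f i = 0 ->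
          forall i : 'I_n, f i = 0)
    & (forall i j a b, Ai i a -> Ai j b -> Ai (i + j)%N (a * b))].

End Defs.

From HB Require Import structures.
From mathcomp Require Import all_boot all_algebra complex.
From mathcomp Require Import reals ring boolp.
Import GRing.Theory Num.Theory.
Local Open Scope ring_scope.
Set Implicit Arguments. Unset Strict Implicit. Unset Printing Implicit Defensive.

(* The Leibniz rule [x (a b) = x(a) b + g(a) x(b)] says that x is a g-twisted
   derivation, and on a central simple algebra over a field of characteristic 0
   every such derivation is inner, [x a = c a - g(a) c]. If g moves a central
   element z, one takes [c = x(z) (z - g z)^-1]. Otherwise x is linear over the
   center Z, and with a Z-basis [b_i], its dual basis [b_i'] for the
   nondegenerate trace form and the invertible central Casimir element
   [e = sum_i b_i b_i'], one takes [c = (sum_i x(b_i) b_i') e^-1]. The relation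
   [g x = q x g] makes [g c - q c] a normalizing element fixed by g, which lets
   one correct c so that [g c = q c].
   For such c and a g-eigenvector a of eigenvalue t, [x^k a] is the
   q-binomial combination of the [c^j a c^(k-j)] with coefficients read off
   [prod_(l < k) (X - q^l)]; for k = m this polynomial is [X^m - 1], so
   [x^m a = c^m a - t^m a c^m], and [x^m = alpha (1 - g^m)] gives the relation
   for [c^m]. Conversely, a grading defines g, [x a := c a - g(a) c] is then a
   twisted derivation, the Taft relations follow from the same computation on
   homogeneous elements, and additive maps agreeing on homogeneous elements
   agree. *)

(** * The center of a simple algebra *)

Section SimpleAlgebra.
Variables (K : fieldType) (A : algType K).
Hypothesis Asimple : simple_alg A.

Lemma simple_ideal1 (I : A -> Prop) (w : A) :
  two_sided_ideal I -> I w -> w != 0 -> I 1.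
Proof.
move=> idI Iw w_neq0; case: Asimple => _ /(_ I idI) [/(_ w Iw)/eqP|]; last exact.
by rewrite (negbTE w_neq0).
Qed.

Lemma normal_unit (F : A -> A) (w : A) : w != 0 ->
  (forall s, w * s = F s * w) -> (forall r, exists s, r = F s) ->
  exists2 v, v * w = 1 & w * v = 1.
Proof.
move=> w_neq0 wF F_onto.
have [v vw] : exists v, 1 = v * w.
  apply: (@simple_ideal1 (fun a => exists r, a = r * w) w) w_neq0; last first.
    by exists 1; rewrite mul1r.
  split; first by exists 0; rewrite mul0r.
  - by move=> _ _ [r ->] [s ->]; exists (r + s); rewrite mulrDl.
  - by move=> r _ [s ->]; exists (r * s); rewrite mulrA.
  - by move=> r _ [s ->]; exists (s * F r); rewrite -mulrA wF mulrA.
have [u wu] : exists u, 1 = w * u.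
  apply: (@simple_ideal1 (fun a => exists r, a = w * r) w) w_neq0; last first.
    by exists 1; rewrite mulr1.
  split; first by exists 0; rewrite mulr0.
  - by move=> _ _ [r ->] [s ->]; exists (r + s); rewrite mulrDr.
  - by move=> r _ [s ->]; have [t ->] := F_onto r; exists (t * s); rewrite mulrA -wF mulrA.
  - by move=> r _ [s ->]; exists (s * r); rewrite mulrA.
have vu : v = u by rewrite -[v]mulr1 wu mulrA -vw mul1r.
by exists v; [rewrite vw | rewrite vu wu].
Qed.

Lemma central_unit (z : A) : central z -> z != 0 ->
  exists2 w, central w & w * z = 1.
Proof.
move=> zC z_neq0; have [|w wz zw] := normal_unit (F := id) z_neq0 zC.
  by move=> r; exists r.
exists w => // b; rewrite -[w * b]mulr1 -zw mulrA -(mulrA w) -zC.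
by rewrite !mulrA wz mul1r.
Qed.

Definition centralb (x : A) : bool := `[< central x >].

Lemma centralbP x : reflect (central x) (centralb x). Proof. exact: asboolP. Qed.

Fact centralb_subring_closed : subring_closed centralb.
Proof.
split; first by apply/centralbP => b; rewrite mul1r mulr1.
  move=> x y /centralbP xC /centralbP yC; apply/centralbP => b.
  by rewrite mulrBl mulrBr xC yC.
move=> x y /centralbP xC /centralbP yC; apply/centralbP => b.
by rewrite -mulrA yC mulrA xC mulrA.
Qed.
HB.instance Definition _ := GRing.isSubringClosed.Build A centralb centralb_subring_closed.

(* The simplicity proof is a parameter of the type so that the field structure
   built from it below can be declared canonical. *)
Record center_of (Asimple : simple_alg A) :=
  Center { center_val : A; _ : centralb center_val }.
Local Notation Z := (center_of Asimple).
HB.instance Definition _ := [isSub for @center_val Asimple].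
HB.instance Definition _ := [Choice of Z by <:].
HB.instance Definition _ := [SubChoice_isSubNzRing of Z by <:].

Lemma center_valC (z : Z) (x : A) : val z * x = x * val z.
Proof. by apply/centralbP; exact: valP. Qed.

Fact center_mulC : commutative (@GRing.mul Z).
Proof. by move=> z w; apply: val_inj; rewrite !rmorphM /= center_valC. Qed.
HB.instance Definition _ := GRing.PzRing_hasCommutativeMul.Build Z center_mulC.

Definition center_inv (z : Z) : Z :=
  if pselect (exists w : Z, w * z == 1) is left ex then xchoose ex else 0.

Fact center_mulVf (z : Z) : z != 0 -> center_inv z * z = 1.
Proof.
move=> z_neq0; rewrite /center_inv; case: pselect => [ex|].
  exact/eqP/(xchooseP ex).
have val_neq0 : val z != 0 by apply: contra z_neq0 => /eqP z0; apply/eqP/val_inj.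
have [w /centralbP wC wz] := central_unit (centralbP _ (valP z)) val_neq0.
by case; exists (Center Asimple wC); apply/eqP/val_inj; rewrite rmorphM /= wz.
Qed.

Fact center_inv0 : center_inv 0 = 0.
Proof.
rewrite /center_inv; case: pselect => // ex; have [w] := ex.
by rewrite mulr0 eq_sym oner_eq0.
Qed.
HB.instance Definition _ := GRing.ComNzRing_isField.Build Z center_mulVf center_inv0.

End SimpleAlgebra.

Section CenterCombinations.
Variables (K : fieldType) (A : algType K) (As : simple_alg A) (N : nat) (s : 'I_N -> A).

Definition center_span :=
  forall a, exists y : 'I_N -> center_of As, a = \sum_i val (y i) * s i.

Definition center_free :=
  forall y : 'I_N -> center_of As, \sum_i val (y i) * s i = 0 -> forall i, y i = 0.

End CenterCombinations.

Lemma center_valV (K : fieldType) (A : algType K) (As : simple_alg A)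
  (z : center_of As) : z != 0 -> val z^-1 * val z = 1.
Proof. by move=> z_neq0; rewrite -rmorphM mulVf ?rmorph1. Qed.

(** * Twisted derivations of a central simple algebra are inner *)

Section CenterBasis.
Variables (K : numFieldType) (A : algType K).
Hypothesis Asimple : simple_alg A.
Local Notation Z := (center_of Asimple).

Variables (d : nat) (b : 'I_d -> A).
Hypotheses (b_span : center_span Asimple b) (b_free : center_free Asimple b).

Let valCA (z : Z) (x y : A) : x * (val z * y) = val z * (x * y).
Proof. by rewrite mulrA -center_valC mulrA. Qed.

Definition coord (a : A) : 'I_d -> Z := proj1_sig (cid (b_span a)).

Lemma coordE a : a = \sum_i val (coord a i) * b i.
Proof. by rewrite /coord; case: cid. Qed.

Lemma coord_uniq a y : a = \sum_i val (y i) * b i -> coord a =1 y.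
Proof.
move=> ay i; apply/eqP; rewrite -subr_eq0; apply/eqP; move: i; apply: b_free.
under eq_bigr do rewrite rmorphB mulrBl.
by rewrite sumrB -ay -coordE subrr.
Qed.

Lemma coordB x y i : coord (x - y) i = coord x i - coord y i.
Proof.
move: i; apply: coord_uniq; under eq_bigr do rewrite rmorphB mulrBl.
by rewrite sumrB -!coordE.
Qed.

Lemma coordZ (z : Z) x i : coord (val z * x) i = z * coord x i.
Proof.
move: i; apply: coord_uniq; under eq_bigr do rewrite rmorphM -mulrA.
by rewrite -mulr_sumr -coordE.
Qed.

Lemma coord_sum (J : finType) (y : J -> Z) (u : J -> A) i :
  coord (\sum_j val (y j) * u j) i = \sum_j y j * coord (u j) i.
Proof.
move: i; apply: coord_uniq; symmetry.
under eq_bigr do rewrite rmorph_sum mulr_suml.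
rewrite exchange_big /=; apply: eq_bigr => j _.
rewrite [u j in RHS]coordE mulr_sumr; apply: eq_bigr => l _.
by rewrite mulrA.
Qed.

Lemma coord_basis l i : coord (b l) i = (l == i)%:R.
Proof.
move: i; apply: coord_uniq.
rewrite (bigD1 l) //= eqxx rmorph1 mul1r big1 ?addr0 // => i /negbTE.
by rewrite eq_sym => ->; rewrite rmorph0 mul0r.
Qed.

Definition ltrace (x : A) : Z := \sum_j coord (x * b j) j.

Fact ltrace_is_zmod_morphism : zmod_morphism ltrace.
Proof.
by move=> x y; rewrite /ltrace -sumrB; apply: eq_bigr => j _; rewrite mulrBl coordB.
Qed.
HB.instance Definition _ := GRing.isZmodMorphism.Build A Z ltrace ltrace_is_zmod_morphism.

Lemma ltraceZ (z : Z) x : ltrace (val z * x) = z * ltrace x.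
Proof. by rewrite /ltrace mulr_sumr; apply: eq_bigr => j _; rewrite -mulrA coordZ. Qed.

Lemma ltrace_sum (J : finType) (y : J -> Z) (u : J -> A) :
  ltrace (\sum_j val (y j) * u j) = \sum_j y j * ltrace (u j).
Proof. by rewrite raddf_sum; apply: eq_bigr => j _ /=; rewrite ltraceZ. Qed.

Lemma ltrace_mulC x y : ltrace (x * y) = ltrace (y * x).
Proof.
suff ltrace_mulE u v :
    ltrace (u * v) = \sum_j \sum_l coord (v * b j) l * coord (u * b l) j.
  rewrite !ltrace_mulE exchange_big; apply: eq_bigr => j _.
  by apply: eq_bigr => l _; rewrite mulrC.
rewrite /ltrace; apply: eq_bigr => j _.
rewrite -mulrA {1}[v * b j]coordE mulr_sumr.
by under eq_bigr do rewrite valCA; rewrite coord_sum.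
Qed.

Lemma ltrace1 : ltrace 1 = d%:R.
Proof.
rewrite /ltrace (eq_bigr (fun _ => 1)) ?sumr_const ?card_ord // => j _.
by rewrite mul1r coord_basis eqxx.
Qed.

Lemma basis_size_gt0 : (0 < d)%N.
Proof.
case: Asimple => one_neq0 _; rewrite lt0n; apply: contra one_neq0 => /eqP d0.
rewrite [1]coordE; apply/eqP/big1 => j _.
by have := ltn_ord j; rewrite [X in (_ < X)%N]d0.
Qed.

Lemma basis_size_neq0 : (d%:R : Z) != 0.
Proof.
(* The only place where the characteristic of K matters. *)
apply/eqP => /(congr1 val); rewrite rmorph_nat rmorph0 -scaler_nat => /eqP.
rewrite scaler_eq0 pnatr_eq0 -[d == 0%N]negbK -lt0n basis_size_gt0 /=.
by case: Asimple => /negbTE ->.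
Qed.

Lemma ltrace_nondeg x : (forall y, ltrace (x * y) = 0) -> x = 0.
Proof.
move=> x_rad; case: Asimple => _ /(_ (fun x => forall y, ltrace (x * y) = 0)) [].
- split; first by move=> y; rewrite mul0r raddf0.
  + by move=> u v hu hv y; rewrite mulrDl raddfD /= hu hv addr0.
  + by move=> r u hu y; rewrite -mulrA ltrace_mulC -mulrA hu.
  + by move=> r u hu y; rewrite -mulrA hu.
- exact.
- by move=> /(_ 1 1); rewrite mulr1 ltrace1 => /eqP; rewrite (negbTE basis_size_neq0).
Qed.

Definition gram : 'M[Z]_d := \matrix_(i, j) ltrace (b i * b j).

Lemma gram_unit : gram \in unitmx.
Proof.
rewrite -row_free_unit; apply: inj_row_free => v v_gram.
pose x := \sum_i val (v ord0 i) * b i.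
have x_b j : ltrace (x * b j) = 0.
  have := congr1 (fun M : 'M[Z]_(1, d) => M ord0 j) v_gram; rewrite !mxE => <-.
  rewrite mulr_suml; under eq_bigr do rewrite -mulrA.
  by rewrite ltrace_sum; apply: eq_bigr => i _; rewrite mxE.
have x0 : x = 0.
  apply: ltrace_nondeg => y; rewrite [y]coordE mulr_sumr.
  under eq_bigr do rewrite valCA.
  by rewrite ltrace_sum big1 // => i _; rewrite x_b mulr0.
by apply/matrixP => i j; rewrite mxE (ord1 i); exact: b_free x0 j.
Qed.

Definition dual_basis (j : 'I_d) : A := \sum_k val (invmx gram k j) * b k.

Lemma ltrace_dual_basis i j : ltrace (b i * dual_basis j) = (i == j)%:R.
Proof.
rewrite /dual_basis mulr_sumr; under eq_bigr do rewrite valCA.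
have -> : (i == j)%:R = (1%:M : 'M[Z]_d) i j by rewrite mxE.
rewrite ltrace_sum -(mulmxV gram_unit) mxE.
by apply: eq_bigr => k _; rewrite mxE mulrC.
Qed.

Lemma ltrace_basis_dual_sum l (t : 'I_d -> Z) :
  ltrace (b l * \sum_i val (t i) * dual_basis i) = t l.
Proof.
rewrite mulr_sumr; under eq_bigr do rewrite valCA.
rewrite ltrace_sum (bigD1 l) //= ltrace_dual_basis eqxx mulr1 big1 ?addr0 // => i.
by rewrite eq_sym ltrace_dual_basis => /negbTE ->; rewrite mulr0.
Qed.

Lemma dual_basis_expansion y : y = \sum_i val (ltrace (b i * y)) * dual_basis i.
Proof.
apply/eqP; rewrite -subr_eq0; apply/eqP/ltrace_nondeg => x.
rewrite ltrace_mulC [x]coordE mulr_suml; under eq_bigr do rewrite -mulrA.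
rewrite ltrace_sum big1 // => l _.
by rewrite mulrBr raddfB /= ltrace_basis_dual_sum subrr mulr0.
Qed.

Lemma coord_dual x i : coord x i = ltrace (x * dual_basis i).
Proof.
rewrite {2}[x]coordE mulr_suml; under eq_bigr do rewrite -mulrA.
rewrite ltrace_sum (bigD1 i) //= ltrace_dual_basis eqxx mulr1 big1 ?addr0 // => l.
by rewrite ltrace_dual_basis => /negbTE ->; rewrite mulr0.
Qed.

Lemma mul_basis_expansion a i :
  a * b i = \sum_j val (ltrace (b i * (dual_basis j * a))) * b j.
Proof.
rewrite {1}[a * b i]coordE; apply: eq_bigr => j _.
by rewrite coord_dual -mulrA ltrace_mulC -mulrA.
Qed.

Lemma casimir_shift (f : {additive A -> A}) :
    (forall (z : Z) x, f (val z * x) = val z * f x) ->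
  forall a, \sum_j f (b j) * (dual_basis j * a) = \sum_i f (a * b i) * dual_basis i.
Proof.
move=> fZ a.
under eq_bigr do rewrite [dual_basis _ * a]dual_basis_expansion mulr_sumr.
rewrite exchange_big; apply: eq_bigr => i _.
rewrite mul_basis_expansion raddf_sum mulr_suml; apply: eq_bigr => j _.
by rewrite valCA fZ -[RHS]mulrA.
Qed.

Definition casimir : A := \sum_i b i * dual_basis i.

Lemma casimir_central : central casimir.
Proof.
move=> a; rewrite /casimir mulr_suml mulr_sumr.
under eq_bigr do rewrite -mulrA.
under [RHS]eq_bigr do rewrite mulrA.
exact: (casimir_shift (f := idfun)).
Qed.

Lemma casimir_neq0 : casimir != 0.
Proof.
apply: contra_neq basis_size_neq0 => cas0.
rewrite -(raddf0 ltrace) -cas0 /casimir raddf_sum.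
rewrite (eq_bigr (fun _ => 1)) ?sumr_const ?card_ord // => i _ /=.
by rewrite ltrace_dual_basis eqxx.
Qed.

Lemma twisted_derivation_inner_basis (G : A -> A) (X : {additive A -> A}) :
    (forall (z : Z) x, X (val z * x) = val z * X x) ->
    (forall x y, X (x * y) = X x * y + G x * X y) ->
  exists c, forall a, X a = c * a - G a * c.
Proof.
move=> XZ XM; pose c1 := \sum_j X (b j) * dual_basis j.
have c1_mul a : c1 * a = X a * casimir + G a * c1.
  rewrite /c1 mulr_suml; under eq_bigr do rewrite -mulrA.
  rewrite casimir_shift // /casimir !mulr_sumr -big_split; apply: eq_bigr => i _.
  by rewrite XM mulrDl !mulrA.
have [w wC wcas] := central_unit Asimple casimir_central casimir_neq0.
exists (c1 * w) => a; rewrite -[X a]mulr1 -wcas wC [X a * _]mulrA.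
have -> : X a * casimir = c1 * a - G a * c1 by rewrite c1_mul addrK.
by rewrite mulrBl -!mulrA (wC a).
Qed.

End CenterBasis.

Lemma center_basis_from_span (K : fieldType) (A : algType K) (As : simple_alg A)
    N (s : 'I_N -> A) :
  center_span As s -> exists d (b : 'I_d -> A), center_span As b /\ center_free As b.
Proof.
elim: N s => [|N IH] s s_span; first by exists 0%N, s; split => // y _ [].
have [s_free|] := pselect (center_free As s); first by exists N.+1, s.
move=> /existsNP[y /not_implyP[y_rel /existsNP[j /eqP yj_neq0]]].
apply: (IH (fun k => s (lift j k))) => a; have [x ->] := s_span a.
exists (fun k => x (lift j k) - x j / y j * y (lift j k)).
move: y_rel; rewrite (bigD1_ord j) //= => /eqP; rewrite addr_eq0 => /eqP y_rel.
rewrite (bigD1_ord j) //= -[s j]mul1r -(center_valV yj_neq0) -mulrA y_rel.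
rewrite !mulrN mulrA mulr_sumr -sumrN addrC -big_split /=.
by apply: eq_bigr => k _; rewrite mulrBl !mulrA.
Qed.

Lemma twisted_derivation_inner (K : numFieldType) (A : algType K) (G : A -> A)
    (X : {additive A -> A}) : central_simple A ->
    (forall z x, central z -> X (z * x) = z * X x) ->
    (forall x y, X (x * y) = X x * y + G x * X y) ->
  exists c, forall a, X a = c * a - G a * c.
Proof.
move=> [As [s s_span]] XZ XM.
have [|d [b [b_span b_free]]] :=
    @center_basis_from_span _ _ As _ (fun i : 'I_(size s) => s`_i).
  move=> a; have [zs [size_zs zsC ->]] := s_span a.
  exists (fun i => insubd (0 : center_of As) zs`_i); apply: eq_bigr => i _.
  by rewrite insubdK //; apply/centralbP/zsC/mem_nth; rewrite size_zs.
apply: (twisted_derivation_inner_basis b_span b_free) => // z x.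
by apply/XZ/centralbP/valP.
Qed.

(** * Iterating a twisted inner derivation *)

Lemma iter_eigen (K : pzRingType) (V : lmodType K) (f : {linear V -> V}) (t : K) a :
  f a = t *: a -> forall k, iter k f a = t ^+ k *: a.
Proof.
move=> fa; elim=> [|k IH]; first by rewrite expr0 scale1r.
by rewrite iterS IH linearZ_LR fa scalerA exprSr.
Qed.

Section TwistedCommutatorPowers.
Variables (K : fieldType) (A : algType K) (G : {rmorphism A -> A}) (X : {linear A -> A}).
Variables (c a : A) (t q : K).
Hypotheses (XG : forall y, X y = c * y - G y * c) (Gc : G c = q *: c) (Ga : G a = t *: a).

Lemma X_monomial k j : (j <= k)%N ->
  X (c ^+ j * a * c ^+ (k - j)) =
  c * (c ^+ j * a * c ^+ (k - j)) - (t * q ^+ k) *: (c ^+ j * a * c ^+ (k - j) * c).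
Proof.
move=> j_le_k; rewrite XG !rmorphM !rmorphXn Gc Ga !exprZn.
rewrite -!scalerAl -!scalerAr -!scalerAl !scalerA; congr (_ - _ *: _).
by rewrite -exprD subnKC // mulrC.
Qed.

Definition monomial_sum k (p : {poly K}) :=
  \sum_(j < k.+1) (p`_j * t ^+ (k - j)) *: (c ^+ j * a * c ^+ (k - j)).

Definition qpochhammer k : {poly K} := \prod_(0 <= l < k) ('X - (q ^+ l)%:P).

Lemma X_monomial_sum k p :
  X (monomial_sum k p) = c * monomial_sum k p - (t * q ^+ k) *: (monomial_sum k p * c).
Proof.
rewrite linear_sum mulr_sumr mulr_suml scaler_sumr -sumrB; apply: eq_bigr => j _.
rewrite linearZ_LR X_monomial -1?ltnS // scalerBr -scalerAr -scalerAl !scalerA.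
by rewrite [_ * (t * _)]mulrC.
Qed.

Lemma monomial_sum_step k (p : {poly K}) : (size p <= k.+1)%N ->
  c * monomial_sum k p - (t * q ^+ k) *: (monomial_sum k p * c)
    = monomial_sum k.+1 (p * ('X - (q ^+ k)%:P)).
Proof.
move=> size_p; rewrite /monomial_sum.
under [in RHS]eq_bigr do rewrite mulrBr coefB coefMX coefMC mulrBl scalerBl.
rewrite sumrB; congr (_ - _).
  rewrite [in RHS]big_ord_recl /= mul0r scale0r add0r mulr_sumr; apply: eq_bigr => j _.
  by rewrite /bump /= add0n add1n subSS -scalerAr !mulrA -exprS.
rewrite [in RHS]big_ord_recr /= (nth_default 0 size_p) !mul0r scale0r addr0.
rewrite mulr_suml scaler_sumr; apply: eq_bigr => j _.
have j_le_k : (j <= k)%N by rewrite -ltnS.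
rewrite (subSn j_le_k) exprS exprSr -scalerAl scalerA mulrA; congr (_ *: _).
by ring.
Qed.

Lemma size_qpochhammer k : (size (qpochhammer k) <= k.+1)%N.
Proof.
elim: k => [|k IH]; first by rewrite /qpochhammer big_geq // size_poly1.
rewrite /qpochhammer big_nat_recr //= -/(qpochhammer k).
by apply: leq_trans (size_polyMleq _ _) _; rewrite size_XsubC addn2.
Qed.

Lemma iter_X k : iter k X a = monomial_sum k (qpochhammer k).
Proof.
elim: k => [|k IH].
  rewrite /monomial_sum /qpochhammer big_geq // big_ord1 coef1 mul1r !expr0.
  by rewrite scale1r mul1r mulr1.
rewrite iterS IH X_monomial_sum monomial_sum_step ?size_qpochhammer //.
by rewrite /qpochhammer big_nat_recr.
Qed.

Lemma iter_X_primitive m : (0 < m)%N -> m.-primitive_root q ->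
  iter m X a = c ^+ m * a - t ^+ m *: (a * c ^+ m).
Proof.
move=> m_gt0 q_prim; rewrite iter_X /qpochhammer (factor_Xn_sub_1 q_prim).
rewrite /monomial_sum; under eq_bigr do rewrite coefB coefXn coef1 mulrBl scalerBl.
rewrite sumrB; congr (_ - _).
  rewrite big_ord_recr /= eqxx mul1r subnn expr0 scale1r mulr1 big1 ?add0r //.
  by move=> j _; rewrite ltn_eqF ?mul0r ?scale0r.
rewrite big_ord_recl /= mul1r subn0 expr0 mul1r big1 ?addr0 // => j _.
by rewrite mul0r scale0r.
Qed.

End TwistedCommutatorPowers.

(** * Taft module algebra structures on a central simple algebra *)

Section TaftModuleAlgebraInner.
Variables (K : numFieldType) (A : algType K) (n m : nat) (q alpha : K) (G X : A -> A).
Hypotheses (n_gt0 : (0 < n)%N) (m_gt0 : (0 < m)%N) (q_prim : m.-primitive_root q).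
Hypotheses (TA : Taft_module_algebra n m q alpha G X) (Acs : central_simple A).

Let Asimple : simple_alg A := Acs.1.
Let G_linear : linear G. Proof. by case: TA => -[]. Qed.
Let X_linear : linear X. Proof. by case: TA => -[]. Qed.
Let iterXm a : iter m X a = alpha *: (a - iter m G a). Proof. by case: TA => -[]. Qed.
Let iterGn a : iter n G a = a. Proof. by case: TA => -[]. Qed.
Let GX a : G (X a) = q *: X (G a). Proof. by case: TA => -[]. Qed.
Let G_monoid : monoid_morphism G. Proof. by case: TA => _ GM G1 _ _; split. Qed.
Let XM a b : X (a * b) = X a * b + G a * X b. Proof. by case: TA. Qed.

HB.instance Definition _ := GRing.isLinear.Build K A A *:%R G G_linear.
HB.instance Definition _ := GRing.isMonoidMorphism.Build A A G G_monoid.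
HB.instance Definition _ := GRing.isLinear.Build K A A *:%R X X_linear.

Let Ginv := iter n.-1 G.
Let GinvK : cancel Ginv G.
Proof. by move=> y; rewrite /Ginv -iterS prednK. Qed.
Let G_onto r : exists s, r = G s. Proof. by exists (Ginv r); rewrite GinvK. Qed.

Lemma G_central z : central z -> central (G z).
Proof. by move=> zC y; rewrite -[y]GinvK -!rmorphM zC. Qed.

Lemma X_inner_of_moved_central z : central z -> G z != z ->
  exists c, forall a, X a = c * a - G a * c.
Proof.
move=> zC Gz_neq_z.
have [w wC wz] : exists2 w, central w & w * (z - G z) = 1.
  apply: central_unit => //; last by rewrite subr_eq0 eq_sym.
  by move=> y; rewrite mulrBl mulrBr zC (G_central zC).
exists (X z * w) => a.
have Xa_z : X a * (z - G z) = X z * a - G a * X z.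
  have := XM z a; rewrite zC XM (G_central zC) => e.
  by rewrite mulrBr -[X a * z](addrK (G a * X z)) e addrAC addrK.
rewrite -[X a]mulr1 -wz wC [X a * _]mulrA Xa_z mulrBl -(mulrA (X z) a) -(wC a).
by rewrite !mulrA.
Qed.

Lemma X_center_linear : q != 1 -> (forall z, central z -> G z = z) ->
  forall z x, central z -> X (z * x) = z * X x.
Proof.
move=> q_neq1 G_center z x zC.
have XzC s : X z * s = G s * X z.
  by have := XM s z; rewrite -zC XM G_center // -(zC (X s)) addrC => /addrI.
suff Xz0 : X z = 0 by rewrite XM Xz0 mul0r add0r G_center.
apply/eqP; apply: contraNT q_neq1 => Xz_neq0.
have [v vXz _] := normal_unit Asimple Xz_neq0 XzC G_onto.
have : X z * X z = q *: (X z * X z) by rewrite {1}XzC GX G_center // -scalerAl.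
rewrite -{1}[X z * X z]scale1r => /eqP; rewrite -subr_eq0 -scalerBl scaler_eq0.
rewrite subr_eq0 => /orP[/eqP-> //|/eqP XzXz0].
by case/eqP: Xz_neq0; rewrite -[X z]mul1r -vXz -mulrA XzXz0 mulr0.
Qed.

Lemma X_inner : q != 1 -> exists c, forall a, X a = c * a - G a * c.
Proof.
move=> q_neq1; case: (pselect (exists2 z, central z & G z != z)) => [[z]|G_center].
  exact: X_inner_of_moved_central.
apply: twisted_derivation_inner Acs _ XM; apply: X_center_linear => // z zC.
by apply/eqP; apply: contra_notT G_center => Gz_neq_z; exists z.
Qed.

Lemma X_inner_eigen : exists c, G c = q *: c /\ forall a, X a = c * a - G a * c.
Proof.
have [q1|q_neq1] := eqVneq q 1.
  have m1 : m = 1%N.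
    by apply/eqP; rewrite -dvdn1 (prim_order_dvd q_prim) q1 expr1.
  exists (alpha%:A); split; first by rewrite linearZ_LR rmorph1 q1 scale1r.
  move=> a; have := iterXm a; rewrite m1 /= => ->.
  by rewrite -scalerAl mul1r -scalerAr mulr1 scalerBr.
(* [d] normalizes A and is fixed by G, so adding a multiple of [d] to [c0]
   does not change the inner derivation. *)
have [c0 Xc0] := X_inner q_neq1; pose d := G c0 - q *: c0.
have dC b : d * b = G b * d.
  have subrACA (u v w x : A) : u - v - (w - x) = u - w - (v - x).
    by rewrite !opprB addrACA [RHS]addrACA [- w + _]addrC.
  rewrite -[b]GinvK; apply/eqP; rewrite -subr_eq0 /d mulrBl mulrBr -scalerAl -scalerAr.
  by rewrite subrACA -scalerBr -!rmorphM /= -linearB /= -Xc0 GX -Xc0 subrr.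
have Gd : G d = d.
  have [->|d_neq0] := eqVneq d 0; first exact: raddf0.
  have [u _ du] := normal_unit Asimple d_neq0 dC G_onto.
  apply/eqP; rewrite eq_sym -subr_eq0; apply/eqP.
  by rewrite -[d - G d]mulr1 -du mulrA mulrBl -dC subrr mul0r.
have Gc0 : G c0 = q *: c0 + d by rewrite /d addrC subrK.
clearbody d.
exists (c0 + (q - 1)^-1 *: d); split.
  rewrite linearD linearZ_LR /= Gd Gc0 scalerDr scalerA -addrA; congr (_ + _).
  by rewrite -{1}[d]scale1r -scalerDl; congr (_ *: _); field; rewrite subr_eq0.
move=> a; rewrite mulrDl mulrDr -scalerAl -scalerAr dC.
by rewrite [G a * c0 + _]addrC opprD addrA addrK Xc0.
Qed.

Lemma Taft_module_algebra_inner :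
  exists c, G c = q *: c /\
    forall (t : K) a, G a = t *: a ->
      X a = c * a - t *: (a * c) /\
      c ^+ m * a - t ^+ m *: (a * c ^+ m) = (alpha * (1 - t ^+ m)) *: a.
Proof.
have [c [Gc Xc]] := X_inner_eigen; exists c; split => // t a Ga.
split; first by rewrite Xc Ga -scalerAl.
rewrite -(iter_X_primitive Xc Gc Ga m_gt0 q_prim) iterXm (iter_eigen Ga).
by rewrite -scalerA scalerBl scale1r.
Qed.

End TaftModuleAlgebraInner.

(** * Taft actions on a graded algebra *)

Section GradedTaftAction.
Variables (K : fieldType) (A : algType K) (n m : nat) (q zeta alpha : K).
Hypotheses (m_gt0 : (0 < m)%N) (q_prim : m.-primitive_root q).
Hypotheses (zeta_prim : n.-primitive_root zeta) (zeta_q : zeta ^+ (n %/ m) = q).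
Variables (Ai : nat -> A -> Prop) (c : A).
Hypotheses (Agr : Zn_grading n Ai) (Ac : Ai (n %/ m)%N c).
Hypothesis c_rel : forall i a, Ai i a ->
  c ^+ m * a - zeta ^+ (m * i) *: (a * c ^+ m) = (alpha * (1 - zeta ^+ (m * i))) *: a.

Let n_gt0 : (0 < n)%N. Proof. exact: prim_order_gt0 zeta_prim. Qed.

Lemma homog0 i : Ai i 0. Proof. by case: Agr => /(_ i)[]. Qed.

Lemma homogL i k a b : Ai i a -> Ai i b -> Ai i (k *: a + b).
Proof. by case: Agr => /(_ i)[_ homogL] *; apply: homogL. Qed.

Lemma homogB i a b : Ai i a -> Ai i b -> Ai i (a - b).
Proof. by move=> ha hb; rewrite addrC -scaleN1r; apply: homogL. Qed.

Lemma homog_mod i a : Ai i a -> Ai (i %% n)%N a. Proof. by case: Agr => _ /(_ i a)[]. Qed.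

Lemma homogM i j a b : Ai i a -> Ai j b -> Ai (i + j)%N (a * b).
Proof. by case: Agr => _ _ _ _; apply. Qed.

Definition component (a : A) : 'I_n -> A :=
  proj1_sig (cid (match Agr with And5 _ _ decomp _ _ => decomp a end)).

Lemma component_homog a (i : 'I_n) : Ai i (component a i).
Proof. by rewrite /component; case: cid => f f_decomp; exact: f_decomp.1. Qed.

Lemma sum_component a : a = \sum_i component a i.
Proof. by rewrite /component; case: cid => f f_decomp; exact: f_decomp.2. Qed.

Lemma component_uniq a f : (forall i : 'I_n, Ai i (f i)) -> a = \sum_i f i ->
  component a =1 f.
Proof.
move=> f_homog a_f; case: Agr => _ _ _ direct _.
have := direct (fun i => component a i - f i); rewrite sumrB -sum_component -a_f subrr.
move=> comp_f i; apply/eqP; rewrite -subr_eq0; apply/eqP/comp_f => // j.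
by apply: homogB; [exact: component_homog | exact: f_homog].
Qed.

Lemma component_homogE i a : Ai i a ->
  forall j : 'I_n, component a j = if j == (i %% n)%N :> nat then a else 0.
Proof.
move=> ha; apply: component_uniq => [j|].
  by case: eqP => [->|_]; [exact: homog_mod | exact: homog0].
rewrite (bigD1 (Ordinal (div.ltn_pmod i n_gt0))) //= eqxx big1 ?addr0 // => j.
by rewrite -val_eqE /= => /negbTE ->.
Qed.

Lemma componentL k a b i :
  component (k *: a + b) i = k *: component a i + component b i.
Proof.
move: i; apply: component_uniq => [i|]; first by apply: homogL; exact: component_homog.
by rewrite big_split -scaler_sumr -!sum_component.
Qed.

Lemma graded_ext (P Q : A -> A) :
    {morph P : x y / x + y} -> {morph Q : x y / x + y} ->
  (forall i y, Ai i y -> P y = Q y) -> P =1 Q.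
Proof.
move=> PD QD PQ a.
have morph0 (f : A -> A) : {morph f : x y / x + y} -> f 0 = 0.
  by move=> fD; apply/(addrI (f 0)); rewrite -fD !addr0.
rewrite [a]sum_component (big_morph P PD (morph0 P PD)) (big_morph Q QD (morph0 Q QD)).
by apply: eq_bigr => i _; exact: PQ (component_homog a i).
Qed.

Definition gact (a : A) : A := \sum_(i < n) zeta ^+ i *: component a i.

Lemma gact_homog i a : Ai i a -> gact a = zeta ^+ i *: a.
Proof.
move=> ha; rewrite /gact (bigD1 (Ordinal (div.ltn_pmod i n_gt0))) //=.
rewrite (component_homogE ha) eqxx prim_expr_mod // big1 ?addr0 // => j.
by rewrite -val_eqE /= (component_homogE ha) => /negbTE ->; rewrite scaler0.
Qed.

Fact gact_is_linear : linear gact.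
Proof.
move=> k a b; rewrite /gact scaler_sumr -big_split; apply: eq_bigr => i _.
by rewrite componentL scalerDr !scalerA mulrC.
Qed.
HB.instance Definition _ := GRing.isLinear.Build K A A *:%R gact gact_is_linear.

Lemma iter_morphD (f : A -> A) : {morph f : x y / x + y} ->
  forall k, {morph iter k f : x y / x + y}.
Proof. by move=> fD; elim=> [|k IH] x y //=; rewrite IH fD. Qed.

Lemma iter_gact_n : iter n gact =1 id.
Proof.
apply: graded_ext => [||i y hy] //; first exact/iter_morphD/raddfD.
by rewrite (iter_eigen (gact_homog hy)) exprAC (prim_expr_order zeta_prim) expr1n scale1r.
Qed.

Lemma gactM a b : gact (a * b) = gact a * gact b.
Proof.
move: a; apply: graded_ext => [x y|x y|i a ha] /=.
- by rewrite mulrDl raddfD.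
- by rewrite raddfD mulrDl.
move: b; apply: graded_ext => [x y|x y|j b hb] /=.
- by rewrite mulrDr raddfD.
- by rewrite raddfD mulrDr.
rewrite (gact_homog (homogM ha hb)) (gact_homog ha) (gact_homog hb).
by rewrite -scalerAl -scalerAr scalerA exprD.
Qed.

Lemma gact1 : gact 1 = 1.
Proof.
pose y := iter n.-1 gact 1.
have gact_y : gact y = 1 by rewrite /y -iterS prednK ?iter_gact_n.
by rewrite -[gact 1]mulr1 -{2}gact_y -gactM mul1r.
Qed.

Fact gact_monoid_morphism : monoid_morphism gact.
Proof. by split; [exact: gact1 | exact: gactM]. Qed.
HB.instance Definition _ := GRing.isMonoidMorphism.Build A A gact gact_monoid_morphism.

Lemma gact_c : gact c = q *: c. Proof. by rewrite (gact_homog Ac) zeta_q. Qed.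

Definition xact (a : A) : A := c * a - gact a * c.

Fact xact_is_linear : linear xact.
Proof.
move=> k a b; rewrite /xact linearP /= mulrDr mulrDl -scalerAr -scalerAl scalerBr.
by rewrite opprD addrACA.
Qed.
HB.instance Definition _ := GRing.isLinear.Build K A A *:%R xact xact_is_linear.

Lemma xactM a b : xact (a * b) = xact a * b + gact a * xact b.
Proof. by rewrite /xact rmorphM mulrBl mulrBr !mulrA addrA subrK. Qed.

Lemma gact_xact a : gact (xact a) = q *: xact (gact a).
Proof. by rewrite /xact linearB /= !rmorphM /= gact_c -scalerAl -scalerAr scalerBr. Qed.

Lemma iter_xact_m a : iter m xact a = alpha *: (a - iter m gact a).
Proof.
move: a; apply: (graded_ext (Q := fun a => alpha *: (a - iter m gact a))) => [||i y hy].
- exact/iter_morphD/raddfD.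
- by move=> x y; rewrite (iter_morphD (raddfD gact)) opprD addrACA scalerDr.
- rewrite (iter_X_primitive (G := gact) (X := xact) _ gact_c (gact_homog hy)) //.
  by rewrite (iter_eigen (gact_homog hy)) -exprM mulnC c_rel // -scalerA scalerBl scale1r.
Qed.

Lemma act_homog i a : Ai i a ->
  gact a = zeta ^+ i *: a /\ xact a = c * a - zeta ^+ i *: (a * c).
Proof. by move=> ha; rewrite /xact (gact_homog ha) -scalerAl. Qed.

Lemma act_Taft_module : Taft_module n m q alpha gact xact.
Proof.
split.
- exact: gact_is_linear.
- exact: xact_is_linear.
- exact: iter_xact_m.
- exact: iter_gact_n.
- exact: gact_xact.
Qed.

Lemma act_Taft_module_algebra : Taft_module_algebra n m q alpha gact xact.
Proof.
split; [exact: act_Taft_module | exact: gactM | exact: gact1 | exact: xactM |].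
by rewrite /xact gact1 mulr1 mul1r subrr.
Qed.

Lemma act_uniq G' X' : Taft_module n m q alpha G' X' ->
    (forall i a, Ai i a -> G' a = zeta ^+ i *: a /\ X' a = c * a - zeta ^+ i *: (a * c)) ->
  forall a, G' a = gact a /\ X' a = xact a.
Proof.
move=> [G'L X'L _ _ _] G'X'_homog a.
have morphD (f : A -> A) :
    (forall (k : K) x y, f (k *: x + y) = k *: f x + f y) -> {morph f : x y / x + y}.
  by move=> fL x y; rewrite -[x in LHS]scale1r fL scale1r.
split; move: a; apply: graded_ext => [||i y hy]; do ?[exact: morphD | exact: raddfD].
  by rewrite (act_homog hy).1 (G'X'_homog i y hy).1.
by rewrite (act_homog hy).2 (G'X'_homog i y hy).2.
Qed.

End GradedTaftAction.

Theorem theorem3p1 (R : realType) (n m : nat) (q zeta alpha : R[i])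
  (m_gt0 : (0 < m)%N) (m_dvd_n : (m %| n)%N)
  (q_prim : m.-primitive_root q) (zeta_prim : n.-primitive_root zeta)
  (zeta_q : zeta ^+ (n %/ m) = q) :
  (* (i) *)
  (forall (A : algType R[i]) (G X : A -> A),
     central_simple A -> Taft_module_algebra n m q alpha G X ->
     exists c : A,
       G c = zeta ^+ (n %/ m) *: c /\
       (forall (i : nat) (a : A), G a = zeta ^+ i *: a ->
          X a = c * a - zeta ^+ i *: (a * c) /\
          c ^+ m * a - zeta ^+ (m * i) *: (a * c ^+ m)
            = (alpha * (1 - zeta ^+ (m * i))) *: a))
  /\
  (* (ii) *)
  (forall (A : algType R[i]) (Ai : nat -> A -> Prop) (c : A),
     Zn_grading n Ai -> central_simple A -> division_alg A ->
     Ai (n %/ m)%N c ->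
     (forall (i : nat) (a : A), Ai i a ->
        c ^+ m * a - zeta ^+ (m * i) *: (a * c ^+ m)
          = (alpha * (1 - zeta ^+ (m * i))) *: a) ->
     let formulas (G X : A -> A) :=
       forall (i : nat) (a : A), Ai i a ->
         G a = zeta ^+ i *: a /\ X a = c * a - zeta ^+ i *: (a * c) in
     exists G X : A -> A,
       [/\ Taft_module n m q alpha G X, formulas G X,
           Taft_module_algebra n m q alpha G X
         & forall G' X' : A -> A, Taft_module n m q alpha G' X' ->
             formulas G' X' -> (forall a, G' a = G a /\ X' a = X a)]).
Proof.
have n_gt0 := prim_order_gt0 zeta_prim.
split.
  move=> A G X Acs TA.
  have [c [Gc Xc]] := Taft_module_algebra_inner n_gt0 m_gt0 q_prim TA Acs.
  exists c; split=> [|i a Ga]; first by rewrite zeta_q.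
  by rewrite mulnC exprM; exact: Xc.
move=> A Ai c Agr _ _ Ac c_rel formulas.
exists (gact zeta Agr), (xact zeta c Agr); split.
- exact: act_Taft_module.
- exact: act_homog.
- exact: act_Taft_module_algebra.
- exact: act_uniq.
Qed.
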